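(* Let $M$ be a path-connected pre-$\Delta$-monoid with identity $e$, and let $\alpha_n,\beta_n\in\Omega(M,e)$ be null-sequences. Then $\prod_{n=1}^{\infty}(\alpha_n\cdot\beta_n)\simeq\left(\prod_{n=1}^{\infty}\alpha_n\right)\cdot\left(\prod_{n=1}^{\infty}\beta_n\right)$ by a path-homotopy whose image lies in $\mathrm{Im}\left(\prod_{n=1}^\infty\alpha_n\right)\ast\mathrm{Im}\left(\prod_{n=1}^\infty\beta_n\right)$.
   Context: A pre-$\Delta$-monoid is a space $M$ with an associative operation $\ast$ with identity $e$ such that for any continuous paths $\alpha,\beta:[0,1]\to M$, the pointwise product $t\mapsto\alpha(t)\ast\beta(t)$ is continuous. For $A,B\subseteq M$, $A\ast B=\{a\ast b\mid a\in A,b\in B\}$. $\alpha\cdot\beta$ denotes path concatenation. A sequence of loops $\alpha_n\in\Omega(M,e)$ is a null-sequence if every neighborhood of $e$ contains $\mathrm{Im}(\alpha_n)$ for all but finitely many $n$; its infinite concatenation $\prod_{n=1}^\infty\alpha_n$ is the loop equal to (a linear reparametrization of) $\alpha_n$ on $[\frac{n-1}{n},\frac{n}{n+1}]$ and sending $1$ to $e$. *)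

(* topology on M is given abstractly; [0,1] and [0,1]^2 carry
   their standard metric topology (continuity stated epsilon-delta style,
   which is literally "preimages of open sets are open" for metric domains). *)
From Stdlib Require Import Reals Lra ZArith.
Open Scope R_scope.

Record topology (X : Type) := Topology {
  is_open : (X -> Prop) -> Prop;
  open_full : is_open (fun _ => True);
  open_inter : forall U V, is_open U -> is_open V -> is_open (fun x => U x /\ V x);
  open_union : forall F : (X -> Prop) -> Prop,
      (forall U, F U -> is_open U) -> is_open (fun x => exists U, F U /\ U x)
}.
Arguments is_open {X} _ _.

Definition I : Type := {t : R | 0 <= t <= 1}.
Definition ival (t : I) : R := proj1_sig t.

Lemma clamp01 (r : R) : 0 <= Rmax 0 (Rmin 1 r) <= 1.
Proof. unfold Rmax, Rmin; repeat destruct Rle_dec; lra. Qed.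

Definition mkI (r : R) : I := exist _ (Rmax 0 (Rmin 1 r)) (clamp01 r).

Definition path_continuous {X : Type} (T : topology X) (f : I -> X) : Prop :=
  forall V, is_open T V -> forall s : I, V (f s) ->
    exists eps, eps > 0 /\ forall s' : I, Rabs (ival s' - ival s) < eps -> V (f s').

Definition cont2 {X : Type} (T : topology X) (H : I -> I -> X) : Prop :=
  forall V, is_open T V -> forall s t : I, V (H s t) ->
    exists eps, eps > 0 /\ forall s' t' : I,
      Rabs (ival s' - ival s) < eps -> Rabs (ival t' - ival t) < eps -> V (H s' t').

Definition path_connected {X : Type} (T : topology X) : Prop :=
  forall x y : X, exists p : I -> X, path_continuous T p /\
    (forall t : I, ival t = 0 -> p t = x) /\ (forall t : I, ival t = 1 -> p t = y).

Definition pre_delta_monoid {M : Type} (T : topology M) (op : M -> M -> M) (e : M) : Prop :=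
  (forall x y z, op x (op y z) = op (op x y) z) /\
  (forall x, op e x = x) /\ (forall x, op x e = x) /\
  (forall a b : I -> M, path_continuous T a -> path_continuous T b ->
     path_continuous T (fun t => op (a t) (b t))).

Definition is_loop {M : Type} (T : topology M) (e : M) (f : I -> M) : Prop :=
  path_continuous T f /\ (forall t : I, ival t = 0 -> f t = e) /\
  (forall t : I, ival t = 1 -> f t = e).

Definition null_seq {M : Type} (T : topology M) (e : M) (a : nat -> I -> M) : Prop :=
  forall U, is_open T U -> U e ->
    exists N : nat, forall n, (N <= n)%nat -> forall t : I, U (a n t).

Definition concat {M : Type} (a b : I -> M) (t : I) : M :=
  if Rle_dec (ival t) (1/2) then a (mkI (2 * ival t)) else b (mkI (2 * ival t - 1)).

(* Infinite concatenation; a 0 plays the role of alpha_1.  The k-th term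
   (k >= 0) occupies [k/(k+1), (k+1)/(k+2)], linearly reparametrized;
   for t < 1 the index is k = floor(1/(1-t)) - 1; t = 1 goes to e. *)
Definition inf_concat {M : Type} (e : M) (a : nat -> I -> M) (t : I) : M :=
  if Rlt_dec (ival t) 1 then
    let k := Z.to_nat (Int_part (/ (1 - ival t)) - 1) in
    a k (mkI ((ival t - INR k / INR (k + 1)) * INR (k + 1) * INR (k + 2)))
  else e.

Definition image {M : Type} (f : I -> M) : M -> Prop := fun x => exists t, f t = x.

Definition setmul {M : Type} (op : M -> M -> M) (A B : M -> Prop) : M -> Prop :=
  fun x => exists a b, A a /\ B b /\ x = op a b.

Definition path_homotopic_in {M : Type} (T : topology M) (f g : I -> M) (S : M -> Prop) : Prop :=
  exists H : I -> I -> M, cont2 T H /\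
    (forall s t : I, ival t = 0 -> H s t = f s) /\
    (forall s t : I, ival t = 1 -> H s t = g s) /\
    (forall s t : I, ival s = 0 -> H s t = f s) /\
    (forall s t : I, ival s = 1 -> H s t = f s) /\
    (forall s t : I, S (H s t)).

(* Write A and B for the infinite concatenations of the alpha_n and of the
   beta_n.  On its n-th block the left-hand loop runs through alpha_n . beta_n,
   and since these are loops at the identity, alpha_n . beta_n (r) =
   alpha_n (min (2r) 1) * beta_n (max 0 (2r - 1)); reparametrising block by
   block therefore writes the left-hand loop as s |-> A (u s) * B (v s).
   Likewise A . B (s) = A (2s) * B (2s - 1), with parameters clamped to [0,1].
   The straight-line homotopies between these reparametrisations of [0,1]
   give H (s, t) = A (x (s,t)) * B (y (s,t)), whose values lie in
   Im A * Im B by construction.  Continuity of H is the point: in a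
   pre-Delta-monoid, (u, v) |-> A u * B v is jointly continuous whenever A and
   B are paths. *)

From Stdlib Require Import Reals Lra Lia ZArith.
From Stdlib Require Import Classical ClassicalEpsilon ProofIrrelevance.
Open Scope R_scope.

Lemma ival_inj (x y : I) : ival x = ival y -> x = y.
Proof.
  destruct x as [x hx], y as [y hy]; simpl; intros ->.
  f_equal; apply proof_irrelevance.
Qed.

Lemma ival_range (x : I) : 0 <= ival x <= 1.
Proof. destruct x; auto. Qed.

Lemma ival_mkI r : 0 <= r <= 1 -> ival (mkI r) = r.
Proof. intros. unfold mkI, ival; simpl. unfold Rmax, Rmin; repeat destruct Rle_dec; lra. Qed.

Lemma ival_mkI_le0 r : r <= 0 -> ival (mkI r) = 0.
Proof. intros. unfold mkI, ival; simpl. unfold Rmax, Rmin; repeat destruct Rle_dec; lra. Qed.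

Lemma ival_mkI_ge1 r : 1 <= r -> ival (mkI r) = 1.
Proof. intros. unfold mkI, ival; simpl. unfold Rmax, Rmin; repeat destruct Rle_dec; lra. Qed.

Lemma mkI_lipschitz r s : Rabs (ival (mkI r) - ival (mkI s)) <= Rabs (r - s).
Proof.
  unfold mkI, ival; simpl.
  unfold Rmax, Rmin, Rabs; repeat destruct Rle_dec; repeat destruct Rcase_abs; lra.
Qed.

Lemma inv_succ_small eps : eps > 0 ->
  exists N : nat, forall n, (N <= n)%nat -> / (INR n + 1) < eps.
Proof.
  intros he. destruct (archimed_cor1 eps he) as [N [h1 h2]]. exists N. intros n hn.
  apply le_INR in hn. apply lt_INR in h2. simpl in h2.
  apply Rle_lt_trans with (/ INR N); auto. apply Rinv_le_contravar; lra.
Qed.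

Definition I_open (U : I -> Prop) : Prop :=
  forall x, U x -> exists eps, eps > 0 /\ forall y : I, Rabs (ival y - ival x) < eps -> U y.

Lemma I_open_full : I_open (fun _ => True).
Proof. intros x _; exists 1; split; auto; lra. Qed.

Lemma I_open_inter U V : I_open U -> I_open V -> I_open (fun x => U x /\ V x).
Proof.
  intros hU hV x [ux vx]. destruct (hU x ux) as [e1 [h1 H1]]. destruct (hV x vx) as [e2 [h2 H2]].
  exists (Rmin e1 e2); split; [apply Rmin_pos; lra|]. intros y hy.
  pose proof (Rmin_l e1 e2); pose proof (Rmin_r e1 e2). split; [apply H1|apply H2]; lra.
Qed.

Lemma I_open_union (F : (I -> Prop) -> Prop) :
  (forall U, F U -> I_open U) -> I_open (fun x => exists U, F U /\ U x).
Proof.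
  intros hF x [U [fU ux]]. destruct (hF U fU x ux) as [e1 [h1 H1]].
  exists e1; split; auto. intros y hy; exists U; split; auto.
Qed.

Definition I_topology : topology I :=
  {| is_open := I_open; open_full := I_open_full;
     open_inter := I_open_inter; open_union := I_open_union |}.

Lemma I_ball_open (x : I) eps : is_open I_topology (fun y => Rabs (ival y - ival x) < eps).
Proof.
  simpl. intros y hy. exists (eps - Rabs (ival y - ival x)). split; [lra|].
  intros z hz. apply Rabs_def2 in hy. apply Rabs_def2 in hz.
  apply Rabs_def1; unfold Rabs in *; destruct Rcase_abs; lra.
Qed.

Lemma path_continuous_I (g : I -> I) : path_continuous I_topology g ->
  forall s eps, eps > 0 -> exists d, d > 0 /\
    forall s', Rabs (ival s' - ival s) < d -> Rabs (ival (g s') - ival (g s)) < eps.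
Proof.
  intros hg s eps he. apply (hg _ (I_ball_open (g s) eps) s).
  simpl. rewrite Rminus_diag, Rabs_R0; lra.
Qed.

Lemma lipschitz_mkI_continuous (f : R -> R) L : 0 < L ->
  (forall x y, Rabs (f x - f y) <= L * Rabs (x - y)) ->
  path_continuous I_topology (fun s => mkI (f (ival s))).
Proof.
  intros hL hf V HV s Hs. destruct (HV _ Hs) as [eps [he H]].
  exists (eps / L); split; [apply Rdiv_lt_0_compat; lra|]. intros s' hs'. apply H.
  pose proof (hf (ival s') (ival s)). pose proof (mkI_lipschitz (f (ival s')) (f (ival s))).
  apply Rmult_lt_compat_l with (r := L) in hs'; [|lra].
  replace (L * (eps / L)) with eps in hs' by (field; lra). lra.
Qed.

Lemma path_continuous_comp {X} (T : topology X) (p : I -> X) (g : I -> I) :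
  path_continuous T p -> path_continuous I_topology g -> path_continuous T (fun t => p (g t)).
Proof.
  intros hp hg V HV s Hs. destruct (hp V HV (g s) Hs) as [e1 [h1 H1]].
  destruct (path_continuous_I g hg s e1 h1) as [d [hd Hd]].
  exists d; split; auto.
Qed.

(* [inf_concat] runs its k-th path on the block
   [k/(k+1), (k+1)/(k+2)] = [block_point k 0, block_point k 1];
   [block_index] and [block_coord] are the block index and the local
   coordinate used in its definition. *)
Definition block_index (x : R) : nat := Z.to_nat (Int_part (/ (1 - x)) - 1).

Definition block_coord (k : nat) (x : R) : R :=
  (x - INR k / INR (k + 1)) * INR (k + 1) * INR (k + 2).

Definition block_point (k : nat) (l : R) : R :=
  INR k / (INR k + 1) + l / ((INR k + 1) * (INR k + 2)).

Lemma block_coord_eq k x : block_coord k x = (x * (INR k + 1) - INR k) * (INR k + 2).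
Proof.
  unfold block_coord; rewrite !plus_INR; simpl. field. pose proof (pos_INR k); lra.
Qed.

Lemma block_coord_sub k x y :
  block_coord k x - block_coord k y = (x - y) * ((INR k + 1) * (INR k + 2)).
Proof. rewrite !block_coord_eq. ring. Qed.

Lemma block_coord_point k l : block_coord k (block_point k l) = l.
Proof. rewrite block_coord_eq; unfold block_point. field. pose proof (pos_INR k); lra. Qed.

Lemma block_point_coord k x : block_point k (block_coord k x) = x.
Proof. unfold block_point; rewrite block_coord_eq. field. pose proof (pos_INR k); lra. Qed.

Lemma block_point_succ k : block_point k 1 = block_point (S k) 0.
Proof. unfold block_point. rewrite S_INR. field. pose proof (pos_INR k); lra. Qed.

Lemma block_coord_bounds k x :
  0 <= block_coord k x < 1 <-> INR k <= x * (INR k + 1) /\ x * (INR k + 2) < INR k + 1.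
Proof. rewrite block_coord_eq. pose proof (pos_INR k). split; intros [h1 h2]; split; nra. Qed.

Lemma block_index_eq k x : 0 <= block_coord k x < 1 -> block_index x = k.
Proof.
  rewrite block_coord_bounds. intros [h1 h2].
  pose proof (pos_INR k) as hk. set (K := INR k) in *.
  assert (hx : x < 1) by nra.
  assert (hz : (1 - x) * / (1 - x) = 1) by (field; lra).
  assert (hz0 : 0 < / (1 - x)) by (apply Rinv_0_lt_compat; lra).
  set (z := / (1 - x)) in *.
  assert (H1 : z < IZR (Z.of_nat k + 2)).
  { rewrite plus_IZR, <- INR_IZR_INZ. fold K. nra. }
  assert (H2 : IZR (Z.of_nat k + 2) <= z + 1).
  { rewrite plus_IZR, <- INR_IZR_INZ. fold K. nra. }
  unfold block_index, Int_part. fold z. rewrite <- (tech_up _ _ H1 H2).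
  replace (Z.of_nat k + 2 - 1 - 1)%Z with (Z.of_nat k) by ring. apply Nat2Z.id.
Qed.

Lemma block_coord_index x : 0 <= x < 1 -> 0 <= block_coord (block_index x) x < 1.
Proof.
  intros hx. rewrite block_coord_bounds.
  assert (hz : (1 - x) * / (1 - x) = 1) by (field; lra).
  assert (hz0 : 0 < / (1 - x)) by (apply Rinv_0_lt_compat; lra).
  assert (hz1 : 1 <= / (1 - x)) by nra.
  unfold block_index. set (z := / (1 - x)) in *.
  destruct (base_Int_part z) as [b1 b2]. set (m := Int_part z) in *.
  assert (hm : (0 < m)%Z) by (apply lt_0_IZR; lra).
  rewrite INR_IZR_INZ, Z2Nat.id by lia. rewrite minus_IZR. simpl.
  split; nra.
Qed.

Lemma block_index_large N x : 1 - / (INR N + 1) < x < 1 -> (N <= block_index x)%nat.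
Proof.
  intros hx. pose proof (pos_INR N).
  assert (hN : (INR N + 1) * / (INR N + 1) = 1) by (field; lra).
  assert (0 < / (INR N + 1)) by (apply Rinv_0_lt_compat; lra).
  assert (hx0 : 0 <= x < 1) by nra.
  apply block_coord_index, block_coord_bounds in hx0 as [_ h2].
  destruct (le_lt_dec N (block_index x)) as [l|l]; auto. exfalso.
  apply le_INR in l. rewrite S_INR in l.
  set (K := INR (block_index x)) in *.
  assert (0 <= K) by apply pos_INR.
  nra.
Qed.

Lemma block_point_range k l : 0 <= l <= 1 -> 0 <= block_point k l <= 1.
Proof.
  intros hl. pose proof (pos_INR k) as hk.
  pose proof (block_coord_point k l) as E. rewrite block_coord_eq in E.
  set (p := block_point k l) in *. split; nra.
Qed.

Lemma block_point_lower k l : 0 <= l -> 1 - / (INR k + 1) <= block_point k l.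
Proof.
  intros hl. pose proof (pos_INR k) as hk. unfold block_point.
  replace (1 - / (INR k + 1)) with (INR k / (INR k + 1)) by (field; lra).
  assert (0 <= l / ((INR k + 1) * (INR k + 2))).
  { apply Rmult_le_pos; [lra|]. left; apply Rinv_0_lt_compat; nra. }
  lra.
Qed.

Lemma block_point_lipschitz k u v : Rabs (block_point k u - block_point k v) <= Rabs (u - v).
Proof.
  pose proof (pos_INR k). pose proof (block_coord_sub k (block_point k u) (block_point k v)).
  rewrite !block_coord_point in H0.
  set (d := block_point k u - block_point k v) in *.
  assert (h : Rabs (u - v) = Rabs d * ((INR k + 1) * (INR k + 2))).
  { rewrite H0, Rabs_mult, (Rabs_pos_eq ((INR k + 1) * _)); nra. }
  rewrite h. pose proof (Rabs_pos d). nra.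
Qed.

Lemma block_point_lt k u v : u < v -> block_point k u < block_point k v.
Proof.
  intros huv. pose proof (pos_INR k).
  pose proof (block_coord_sub k (block_point k u) (block_point k v)).
  rewrite !block_coord_point in H0. nra.
Qed.

Lemma block_coord_between k x :
  block_point k 0 <= x <= block_point k 1 -> 0 <= block_coord k x <= 1.
Proof.
  intros hx. pose proof (pos_INR k).
  pose proof (block_coord_sub k x (block_point k 0)).
  pose proof (block_coord_sub k x (block_point k 1)).
  rewrite !block_coord_point in *. split; nra.
Qed.

Section OneSided.
Context {X : Type} (T : topology X).

Definition right_continuous_at (f : I -> X) (s : I) : Prop :=
  forall V, is_open T V -> V (f s) ->
    exists d, d > 0 /\ forall s', ival s <= ival s' < ival s + d -> V (f s').

Definition left_continuous_at (f : I -> X) (s : I) : Prop :=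
  forall V, is_open T V -> V (f s) ->
    exists d, d > 0 /\ forall s', ival s - d < ival s' <= ival s -> V (f s').

Lemma path_continuous_of_sides (f : I -> X) :
  (forall s, right_continuous_at f s /\ left_continuous_at f s) -> path_continuous T f.
Proof.
  intros hf V HV s Hs. destruct (hf s) as [hr hl].
  destruct (hr V HV Hs) as [dr [hdr Hr]]. destruct (hl V HV Hs) as [dl [hdl Hl]].
  exists (Rmin dr dl). split; [apply Rmin_pos; lra|].
  intros s' hs'. apply Rabs_def2 in hs'. pose proof (Rmin_l dr dl). pose proof (Rmin_r dr dl).
  destruct (Rle_lt_dec (ival s) (ival s')); [apply Hr | apply Hl]; lra.
Qed.

Lemma right_continuous_at_1 (f : I -> X) s : ival s = 1 -> right_continuous_at f s.
Proof.
  intros h V _ Hs. exists 1. split; [lra|]. intros s' hs'.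
  replace s' with s; auto. apply ival_inj. pose proof (ival_range s'). lra.
Qed.

Lemma left_continuous_at_0 (f : I -> X) s : ival s = 0 -> left_continuous_at f s.
Proof.
  intros h V _ Hs. exists 1. split; [lra|]. intros s' hs'.
  replace s' with s; auto. apply ival_inj. pose proof (ival_range s'). lra.
Qed.

Section Agree.
Variables (f g : I -> X) (lo hi : R).
Hypothesis g_cont : path_continuous T g.
Hypothesis fg : forall s', lo <= ival s' <= hi -> f s' = g s'.

Lemma right_continuous_at_agree s : lo <= ival s < hi -> right_continuous_at f s.
Proof.
  intros hs V HV Vs. rewrite fg in Vs by lra.
  destruct (g_cont V HV s Vs) as [eps [he H]].
  exists (Rmin eps (hi - ival s)). split; [apply Rmin_pos; lra|].
  intros s' hs'. pose proof (Rmin_l eps (hi - ival s)). pose proof (Rmin_r eps (hi - ival s)).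
  rewrite fg by lra. apply H, Rabs_def1; lra.
Qed.

Lemma left_continuous_at_agree s : lo < ival s <= hi -> left_continuous_at f s.
Proof.
  intros hs V HV Vs. rewrite fg in Vs by lra.
  destruct (g_cont V HV s Vs) as [eps [he H]].
  exists (Rmin eps (ival s - lo)). split; [apply Rmin_pos; lra|].
  intros s' hs'. pose proof (Rmin_l eps (ival s - lo)). pose proof (Rmin_r eps (ival s - lo)).
  rewrite fg by lra. apply H, Rabs_def1; lra.
Qed.
End Agree.
End OneSided.

(** * Infinite concatenation *)

Section InfConcat.
Context {X : Type} (e : X) (a : nat -> I -> X).

Lemma inf_concat_1 t : ival t = 1 -> inf_concat e a t = e.
Proof. intros h; unfold inf_concat; destruct Rlt_dec; [lra|reflexivity]. Qed.

Lemma inf_concat_block k t : 0 <= block_coord k (ival t) < 1 ->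
  inf_concat e a t = a k (mkI (block_coord k (ival t))).
Proof.
  intros hk. pose proof (proj1 (block_coord_bounds _ _) hk) as [h1 h2].
  pose proof (pos_INR k).
  assert (ht : inf_concat e a t =
     a (block_index (ival t)) (mkI (block_coord (block_index (ival t)) (ival t)))).
  { unfold inf_concat; destruct Rlt_dec; [reflexivity|nra]. }
  rewrite ht, (block_index_eq k); auto.
Qed.

Lemma inf_concat_point k l : 0 <= l < 1 -> inf_concat e a (mkI (block_point k l)) = a k (mkI l).
Proof.
  intros hl. assert (hp : 0 <= block_point k l <= 1) by (apply block_point_range; lra).
  rewrite (inf_concat_block k); rewrite ival_mkI, block_coord_point; auto.
Qed.

Lemma inf_concat_0 t : ival t = 0 -> inf_concat e a t = a 0%nat (mkI 0).
Proof.
  intros h. assert (h0 : block_point 0 0 = 0) by (unfold block_point; simpl; field).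
  replace t with (mkI (block_point 0 0)); [apply inf_concat_point; lra|].
  apply ival_inj. rewrite h, h0, ival_mkI; lra.
Qed.

Section Continuity.
Variable T : topology X.
Hypothesis a_cont : forall n, path_continuous T (a n).
Hypothesis a_match : forall n (t t' : I), ival t = 1 -> ival t' = 0 -> a n t = a (S n) t'.
Hypothesis a_null : forall U, is_open T U -> U e ->
  exists N : nat, forall n, (N <= n)%nat -> forall t, U (a n t).

Lemma inf_concat_closed_block k t : 0 <= block_coord k (ival t) <= 1 ->
  inf_concat e a t = a k (mkI (block_coord k (ival t))).
Proof.
  intros hk. destruct (Req_dec (block_coord k (ival t)) 1) as [E|E].
  - assert (ht : t = mkI (block_point (S k) 0)).
    { apply ival_inj. rewrite <- block_point_succ, <- E, block_point_coord, ival_mkI; auto.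
      apply ival_range. }
    rewrite E, ht, inf_concat_point by lra. apply eq_sym, a_match; apply ival_mkI; lra.
  - apply inf_concat_block. lra.
Qed.

Lemma inf_concat_sides_in_block k s : block_point k 0 <= ival s <= block_point k 1 ->
  (ival s < block_point k 1 -> right_continuous_at T (inf_concat e a) s) /\
  (block_point k 0 < ival s -> left_continuous_at T (inf_concat e a) s).
Proof.
  set (g := fun t : I => a k (mkI (block_coord k (ival t)))).
  assert (g_cont : path_continuous T g).
  { apply (path_continuous_comp T (a k) (fun t => mkI (block_coord k (ival t)))); auto.
    pose proof (pos_INR k).
    apply (lipschitz_mkI_continuous (block_coord k) ((INR k + 1) * (INR k + 2))); [nra|].
    intros x y. rewrite block_coord_sub, Rabs_mult, (Rabs_pos_eq (_ * _)) by nra. lra. }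
  assert (fg : forall s', block_point k 0 <= ival s' <= block_point k 1 -> inf_concat e a s' = g s').
  { intros s' hs'. apply inf_concat_closed_block, block_coord_between; auto. }
  intros hs. split; intros h.
  - apply (right_continuous_at_agree _ _ g _ _ g_cont fg). lra.
  - apply (left_continuous_at_agree _ _ g _ _ g_cont fg). lra.
Qed.

Lemma inf_concat_left_continuous_at_1 s : ival s = 1 -> left_continuous_at T (inf_concat e a) s.
Proof.
  intros h V HV Vs. rewrite inf_concat_1 in Vs by auto. destruct (a_null V HV Vs) as [N HN].
  pose proof (pos_INR N).
  exists (/ (INR N + 1)). split; [apply Rinv_0_lt_compat; lra|]. intros s' hs'.
  destruct (Req_dec (ival s') 1) as [E|E]; [rewrite inf_concat_1; auto|].
  pose proof (ival_range s').
  rewrite (inf_concat_block (block_index (ival s'))) by (apply block_coord_index; lra).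
  apply HN, block_index_large. lra.
Qed.

Lemma inf_concat_continuous : path_continuous T (inf_concat e a).
Proof.
  apply path_continuous_of_sides. intros s. pose proof (ival_range s).
  destruct (Req_dec (ival s) 1) as [E|E].
  { split; [apply right_continuous_at_1 | apply inf_concat_left_continuous_at_1]; auto. }
  set (k := block_index (ival s)).
  assert (hl : 0 <= block_coord k (ival s) < 1) by (apply block_coord_index; lra).
  set (l := block_coord k (ival s)) in *.
  assert (hs : ival s = block_point k l) by (symmetry; apply block_point_coord).
  assert (hk : block_point k 0 <= ival s < block_point k 1).
  { rewrite hs. split; [destruct (Req_dec l 0) as [->|]; [lra|left] |]; apply block_point_lt; lra. }
  destruct (inf_concat_sides_in_block k s ltac:(lra)) as [Hr Hl].
  split; [apply Hr; lra|].
  destruct (Rlt_le_dec 0 l) as [lp|l0].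
  - apply Hl. rewrite hs. apply block_point_lt; lra.
  - assert (hs0 : ival s = block_point k 0) by (rewrite hs; f_equal; lra).
    destruct k as [|j].
    + apply left_continuous_at_0. rewrite hs0. unfold block_point; simpl. field.
    + rewrite <- block_point_succ in hs0.
      assert (block_point j 0 < block_point j 1) by (apply block_point_lt; lra).
      apply (inf_concat_sides_in_block j s); lra.
Qed.
End Continuity.
End InfConcat.

(** * Joint continuity of products *)

Definition segment_path (w : nat -> I) (k : nat) (t : I) : I :=
  mkI (ival (w k) + ival t * (ival (w (S k)) - ival (w k))).

Lemma segment_path_val w k t :
  ival (segment_path w k t) = ival (w k) + ival t * (ival (w (S k)) - ival (w k)).
Proof.
  unfold segment_path. apply ival_mkI. pose proof (ival_range t). pose proof (ival_range (w k)).
  pose proof (ival_range (w (S k))). nra.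
Qed.

Definition polygonal (z : I) (w : nat -> I) : I -> I := inf_concat z (segment_path w).

Lemma polygonal_vertex z w n : polygonal z w (mkI (block_point n 0)) = w n.
Proof.
  unfold polygonal. rewrite inf_concat_point by lra.
  apply ival_inj. rewrite segment_path_val, ival_mkI by lra. ring.
Qed.

Lemma polygonal_continuous (z : I) (w : nat -> I) :
  (forall n, Rabs (ival (w n) - ival z) < / (INR n + 1)) ->
  path_continuous I_topology (polygonal z w).
Proof.
  intros hw. apply inf_concat_continuous.
  - intros n. set (c := ival (w (S n)) - ival (w n)).
    apply (lipschitz_mkI_continuous (fun x => ival (w n) + x * c) (Rabs c + 1)).
    { pose proof (Rabs_pos c); lra. }
    intros x y. replace (ival (w n) + x * c - (ival (w n) + y * c)) with (c * (x - y)) by ring.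
    rewrite Rabs_mult. pose proof (Rabs_pos (x - y)). nra.
  - intros n t t' h1 h2. apply ival_inj. rewrite !segment_path_val, h1, h2. ring.
  - intros U HU Uz. destruct (HU z Uz) as [eps [he H]].
    destruct (inv_succ_small eps he) as [N HN]. exists N. intros n hn t. apply H.
    assert (d1 : Rabs (ival (w n) - ival z) < eps).
    { eapply Rlt_trans; [apply hw | apply HN; lia]. }
    assert (d2 : Rabs (ival (w (S n)) - ival z) < eps).
    { eapply Rlt_trans; [apply hw | apply HN; lia]. }
    pose proof (ival_range t).
    rewrite segment_path_val.
    replace (ival (w n) + ival t * (ival (w (S n)) - ival (w n)) - ival z) with
      ((1 - ival t) * (ival (w n) - ival z) + ival t * (ival (w (S n)) - ival z)) by ring.
    eapply Rle_lt_trans; [apply Rabs_triang|].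
    rewrite !Rabs_mult, (Rabs_pos_eq (1 - _)), (Rabs_pos_eq (ival t)) by lra.
    destruct (Req_dec (ival t) 1) as [->|]; [lra|].
    replace eps with ((1 - ival t) * eps + ival t * eps) by ring.
    apply Rplus_lt_le_compat; [apply Rmult_lt_compat_l | apply Rmult_le_compat_l]; lra.
Qed.

Definition pointwise_product_continuous {M : Type} (T : topology M) (op : M -> M -> M) : Prop :=
  forall a b : I -> M, path_continuous T a -> path_continuous T b ->
    path_continuous T (fun t => op (a t) (b t)).

(* If (u, v) |-> p u * q v were discontinuous at (u0, v0), a sequence (u_n, v_n)
   converging to (u0, v0) would stay outside some open V around p u0 * q v0;
   threading polygonal paths through u_n and v_n gives two paths whose
   pointwise product is continuous, yet leaves V at times converging to 1. *)
Lemma cont2_product {M : Type} (T : topology M) (op : M -> M -> M)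
  (p q : I -> M) : pointwise_product_continuous T op ->
  path_continuous T p -> path_continuous T q -> cont2 T (fun u v => op (p u) (q v)).
Proof.
  intros Hop hp hq V HV u0 v0 HV0. apply NNPP; intro Hno.
  assert (Hseq : forall n : nat, exists uv : I * I,
     Rabs (ival (fst uv) - ival u0) < / (INR n + 1) /\
     Rabs (ival (snd uv) - ival v0) < / (INR n + 1) /\ ~ V (op (p (fst uv)) (q (snd uv)))).
  { intro n. apply NNPP; intro H. apply Hno. exists (/ (INR n + 1)). split.
    { apply Rinv_0_lt_compat. pose proof (pos_INR n); lra. }
    intros s' t' h1 h2. apply NNPP; intro h3. apply H. exists (s', t'); simpl; auto. }
  destruct (choice _ Hseq) as [w Hw].
  set (g1 := polygonal u0 (fun n => fst (w n))).
  set (g2 := polygonal v0 (fun n => snd (w n))).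
  assert (c : path_continuous T (fun t => op (p (g1 t)) (q (g2 t)))).
  { apply Hop; apply path_continuous_comp; auto; apply polygonal_continuous; intro n; apply Hw. }
  assert (h1 : ival (mkI 1) = 1) by (apply ival_mkI; lra).
  destruct (c V HV (mkI 1)) as [d [hd Hd]].
  { unfold g1, g2, polygonal. rewrite !inf_concat_1 by auto. exact HV0. }
  destruct (inv_succ_small d hd) as [N HN].
  apply (proj2 (proj2 (Hw N))).
  pose proof (Hd (mkI (block_point N 0))) as HH. unfold g1, g2 in HH.
  rewrite !polygonal_vertex in HH. apply HH.
  pose proof (pos_INR N). pose proof (HN N (le_n _)).
  assert (hb : block_point N 0 = 1 - / (INR N + 1)) by (unfold block_point; field; lra).
  assert (0 < / (INR N + 1)) by (apply Rinv_0_lt_compat; lra).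
  assert (/ (INR N + 1) <= 1).
  { rewrite <- Rinv_1. apply Rinv_le_contravar; lra. }
  rewrite h1, ival_mkI, hb by (rewrite hb; lra). apply Rabs_def1; lra.
Qed.

(** * Reparametrisation block by block *)

Definition unit_reparam (g : R -> R) : Prop :=
  g 0 = 0 /\ g 1 = 1 /\ (forall x, 0 <= x <= 1 -> 0 <= g x <= 1) /\
  exists L, 0 < L /\ forall x y, Rabs (g x - g y) <= L * Rabs (x - y).

Definition blockwise (g : R -> R) : I -> I :=
  inf_concat (mkI 1) (fun k t => mkI (block_point k (g (ival t)))).

Lemma blockwise_continuous g : unit_reparam g -> path_continuous I_topology (blockwise g).
Proof.
  intros [g0 [g1 [gr [L [hL gl]]]]]. apply inf_concat_continuous.
  - intros n. apply (lipschitz_mkI_continuous (fun x => block_point n (g x)) L hL).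
    intros x y. eapply Rle_trans; [apply block_point_lipschitz | apply gl].
  - intros n t t' h1 h2. rewrite h1, h2, g0, g1, block_point_succ. reflexivity.
  - intros U HU U1. destruct (HU _ U1) as [eps [he H]].
    destruct (inv_succ_small eps he) as [N HN]. exists N. intros n hn t. apply H.
    pose proof (gr (ival t) (ival_range t)).
    pose proof (block_point_range n _ H0). pose proof (block_point_lower n (g (ival t))).
    pose proof (HN n hn).
    rewrite !ival_mkI by lra. apply Rabs_def1; lra.
Qed.

Lemma blockwise_0 g s : g 0 = 0 -> ival s = 0 -> ival (blockwise g s) = 0.
Proof.
  intros g0 h. unfold blockwise. rewrite inf_concat_0 by auto.
  rewrite (ival_mkI 0), g0 by lra.
  replace (block_point 0 0) with 0 by (unfold block_point; simpl; field). apply ival_mkI; lra.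
Qed.

Lemma blockwise_1 g s : ival s = 1 -> ival (blockwise g s) = 1.
Proof. intros h. unfold blockwise. rewrite inf_concat_1 by auto. apply ival_mkI; lra. Qed.

Lemma blockwise_point g k r : 0 <= r < 1 -> 0 <= g r <= 1 ->
  blockwise g (mkI (block_point k r)) = mkI (block_point k (g r)).
Proof. intros. unfold blockwise. rewrite inf_concat_point by auto. rewrite ival_mkI by lra. reflexivity. Qed.

Definition half_left (x : R) : R := Rmin (2 * x) 1.
Definition half_right (x : R) : R := Rmax 0 (2 * x - 1).

Lemma unit_reparam_half_left : unit_reparam half_left.
Proof.
  unfold half_left, Rmin. repeat split; [repeat destruct Rle_dec; lra ..|].
  exists 2; split; [lra|]. intros. repeat destruct Rle_dec; unfold Rabs; repeat destruct Rcase_abs; lra.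
Qed.

Lemma unit_reparam_half_right : unit_reparam half_right.
Proof.
  unfold half_right, Rmax. repeat split; [repeat destruct Rle_dec; lra ..|].
  exists 2; split; [lra|]. intros. repeat destruct Rle_dec; unfold Rabs; repeat destruct Rcase_abs; lra.
Qed.

Section Factorisation.
Context {M : Type} (op : M -> M -> M) (e : M).
Hypothesis op_e_l : forall x, op e x = x.
Hypothesis op_e_r : forall x, op x e = x.

Lemma concat_factor (p q : I -> M) :
  (forall t, ival t = 1 -> p t = e) -> (forall t, ival t = 0 -> q t = e) ->
  forall s, concat p q s = op (p (mkI (2 * ival s))) (q (mkI (2 * ival s - 1))).
Proof.
  intros p1 q0 s. unfold concat. destruct Rle_dec.
  - rewrite (q0 (mkI _)) by (apply ival_mkI_le0; lra). auto.
  - rewrite (p1 (mkI _)) by (apply ival_mkI_ge1; lra). auto.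
Qed.

Variables a b : nat -> I -> M.
Hypothesis a_0 : forall n t, ival t = 0 -> a n t = e.
Hypothesis a_1 : forall n t, ival t = 1 -> a n t = e.
Hypothesis b_0 : forall n t, ival t = 0 -> b n t = e.

(* On the k-th block, [blockwise half_left] runs through the k-th block of
   [inf_concat e a] at double speed and then rests at its end, while
   [blockwise half_right] first rests at the start of the k-th block of
   [inf_concat e b]; resting points are block boundaries, where the value is [e]. *)
Lemma inf_concat_concat_factor s :
  inf_concat e (fun n => concat (a n) (b n)) s =
  op (inf_concat e a (blockwise half_left s)) (inf_concat e b (blockwise half_right s)).
Proof.
  destruct unit_reparam_half_left as [_ [_ [hl _]]].
  destruct unit_reparam_half_right as [_ [_ [hr _]]].
  pose proof (ival_range s). destruct (Req_dec (ival s) 1) as [E|E].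
  { rewrite !inf_concat_1; auto; apply blockwise_1; auto. }
  set (k := block_index (ival s)).
  assert (hr0 : 0 <= block_coord k (ival s) < 1) by (apply block_coord_index; lra).
  set (r := block_coord k (ival s)) in *.
  assert (hs : s = mkI (block_point k r)).
  { apply ival_inj. unfold r. rewrite block_point_coord, ival_mkI; auto. }
  rewrite hs, inf_concat_point, !blockwise_point by (auto; try apply hl; try apply hr; lra).
  rewrite concat_factor by auto. rewrite ival_mkI by lra.
  unfold half_left, half_right, Rmin, Rmax.
  destruct (Rle_dec r (1/2)).
  - replace (if Rle_dec 0 (2 * r - 1) then 2 * r - 1 else 0) with 0 by (destruct Rle_dec; lra).
    destruct (Rle_dec (2 * r) 1); [|lra].
    rewrite (inf_concat_point e b), (b_0 k (mkI 0)), (b_0 k (mkI (2 * r - 1))), !op_e_r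
      by (try apply ival_mkI_le0; lra).
    destruct (Req_dec r (1/2)) as [->|].
    + replace (2 * (1/2)) with 1 by lra.
      rewrite block_point_succ, inf_concat_point, (a_0 (S k)), (a_1 k)
        by (rewrite ?ival_mkI; lra).
      reflexivity.
    + rewrite inf_concat_point by lra. reflexivity.
  - destruct (Rle_dec (2 * r) 1); [lra|]. destruct (Rle_dec 0 (2 * r - 1)); [|lra].
    rewrite (a_1 k (mkI (2 * r))) by (apply ival_mkI_ge1; lra).
    rewrite block_point_succ, (inf_concat_point e a), (a_0 (S k)), !op_e_l,
      (inf_concat_point e b) by (rewrite ?ival_mkI; lra).
    reflexivity.
Qed.
End Factorisation.

Definition I_jointly_continuous (F : I -> I -> I) : Prop :=
  forall s t eps, eps > 0 -> exists d, d > 0 /\ forall s' t' : I,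
    Rabs (ival s' - ival s) < d -> Rabs (ival t' - ival t) < d ->
    Rabs (ival (F s' t') - ival (F s t)) < eps.

Definition straight_homotopy (u v : I -> I) (s t : I) : I :=
  mkI ((1 - ival t) * ival (u s) + ival t * ival (v s)).

Lemma straight_homotopy_val u v s t :
  ival (straight_homotopy u v s t) = (1 - ival t) * ival (u s) + ival t * ival (v s).
Proof.
  unfold straight_homotopy. pose proof (ival_range t). pose proof (ival_range (u s)).
  pose proof (ival_range (v s)). apply ival_mkI. nra.
Qed.

Lemma straight_homotopy_jointly_continuous u v :
  path_continuous I_topology u -> path_continuous I_topology v ->
  I_jointly_continuous (straight_homotopy u v).
Proof.
  intros hu hv s t eps he.
  destruct (path_continuous_I u hu s (eps/3)) as [d1 [h1 H1]]; [lra|].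
  destruct (path_continuous_I v hv s (eps/3)) as [d2 [h2 H2]]; [lra|].
  exists (Rmin (Rmin d1 d2) (eps/3)). split; [repeat apply Rmin_pos; lra|].
  intros s' t' l1 l2.
  pose proof (Rmin_l (Rmin d1 d2) (eps/3)). pose proof (Rmin_r (Rmin d1 d2) (eps/3)).
  pose proof (Rmin_l d1 d2). pose proof (Rmin_r d1 d2).
  assert (a1 := H1 s' ltac:(lra)). assert (a2 := H2 s' ltac:(lra)).
  rewrite !straight_homotopy_val.
  pose proof (ival_range t'). pose proof (ival_range (u s)). pose proof (ival_range (v s)).
  replace ((1 - ival t') * ival (u s') + ival t' * ival (v s') -
           ((1 - ival t) * ival (u s) + ival t * ival (v s)))
    with ((1 - ival t') * (ival (u s') - ival (u s)) + ival t' * (ival (v s') - ival (v s)) +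
          (ival t - ival t') * (ival (u s) - ival (v s))) by ring.
  eapply Rle_lt_trans; [apply Rabs_triang|].
  eapply Rle_lt_trans; [apply Rplus_le_compat_r, Rabs_triang|].
  rewrite !Rabs_mult, (Rabs_pos_eq (1 - _)), (Rabs_pos_eq (ival t')) by lra.
  assert (Rabs (ival (u s) - ival (v s)) <= 1) by (unfold Rabs; destruct Rcase_abs; lra).
  rewrite Rabs_minus_sym in l2.
  pose proof (Rabs_pos (ival t - ival t')). pose proof (Rabs_pos (ival (u s') - ival (u s))).
  pose proof (Rabs_pos (ival (v s') - ival (v s))).
  nra.
Qed.

Lemma cont2_comp {M : Type} (T : topology M) (K : I -> I -> M) (F G : I -> I -> I) :
  cont2 T K -> I_jointly_continuous F -> I_jointly_continuous G ->
  cont2 T (fun s t => K (F s t) (G s t)).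
Proof.
  intros hK hF hG V HV s t Hs. destruct (hK V HV _ _ Hs) as [e1 [he1 H1]].
  destruct (hF s t e1 he1) as [d1 [hd1 D1]]. destruct (hG s t e1 he1) as [d2 [hd2 D2]].
  exists (Rmin d1 d2). split; [apply Rmin_pos; lra|]. intros s' t' l1 l2.
  pose proof (Rmin_l d1 d2). pose proof (Rmin_r d1 d2). apply H1; [apply D1|apply D2]; lra.
Qed.

Lemma product_path_homotopic {M : Type} (T : topology M) (op : M -> M -> M)
  (p q : I -> M) (u1 u2 v1 v2 : I -> I) (f g : I -> M) :
  pointwise_product_continuous T op -> path_continuous T p -> path_continuous T q ->
  path_continuous I_topology u1 -> path_continuous I_topology u2 ->
  path_continuous I_topology v1 -> path_continuous I_topology v2 ->
  (forall s, ival s = 0 \/ ival s = 1 -> u1 s = v1 s /\ u2 s = v2 s) ->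
  (forall s, f s = op (p (u1 s)) (q (u2 s))) -> (forall s, g s = op (p (v1 s)) (q (v2 s))) ->
  path_homotopic_in T f g (setmul op (image p) (image q)).
Proof.
  intros Hop hp hq hu1 hu2 hv1 hv2 ends hf hg.
  set (X := straight_homotopy u1 v1). set (Y := straight_homotopy u2 v2).
  assert (at0 : forall s t, ival t = 0 -> X s t = u1 s /\ Y s t = u2 s).
  { intros s t h. split; apply ival_inj; unfold X, Y; rewrite straight_homotopy_val, h; ring. }
  assert (at1 : forall s t, ival t = 1 -> X s t = v1 s /\ Y s t = v2 s).
  { intros s t h. split; apply ival_inj; unfold X, Y; rewrite straight_homotopy_val, h; ring. }
  assert (fixed : forall s t, ival s = 0 \/ ival s = 1 -> X s t = u1 s /\ Y s t = u2 s).
  { intros s t h. destruct (ends s h) as [E1 E2].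
    split; apply ival_inj; unfold X, Y; rewrite straight_homotopy_val, ?E1, ?E2; ring. }
  exists (fun s t => op (p (X s t)) (q (Y s t))).
  split; [|split; [|split; [|split; [|split]]]].
  - apply (cont2_comp T (fun u v => op (p u) (q v))).
    + apply cont2_product; auto.
    + apply straight_homotopy_jointly_continuous; auto.
    + apply straight_homotopy_jointly_continuous; auto.
  - intros s t h. destruct (at0 s t h) as [-> ->]. auto.
  - intros s t h. destruct (at1 s t h) as [-> ->]. auto.
  - intros s t h. destruct (fixed s t (or_introl h)) as [-> ->]. auto.
  - intros s t h. destruct (fixed s t (or_intror h)) as [-> ->]. auto.
  - intros s t. exists (p (X s t)), (q (Y s t)). repeat split; eexists; reflexivity.
Qed.

Lemma loop_start {M : Type} (T : topology M) (e : M) (f : I -> M) :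
  is_loop T e f -> forall t, ival t = 0 -> f t = e.
Proof. intros [_ [h _]]; exact h. Qed.

Lemma loop_end {M : Type} (T : topology M) (e : M) (f : I -> M) :
  is_loop T e f -> forall t, ival t = 1 -> f t = e.
Proof. intros [_ [_ h]]; exact h. Qed.

Lemma inf_concat_loops_continuous {M : Type} (T : topology M) (e : M) (a : nat -> I -> M) :
  (forall n, is_loop T e (a n)) -> null_seq T e a -> path_continuous T (inf_concat e a).
Proof.
  intros Ha Hn. apply inf_concat_continuous; [intro n; apply Ha | | exact Hn].
  intros n t t' h1 h2. rewrite (loop_end T e _ (Ha n)), (loop_start T e _ (Ha (S n))); auto.
Qed.

Lemma inf_concat_loops_0 {M : Type} (T : topology M) (e : M) (a : nat -> I -> M) t :
  (forall n, is_loop T e (a n)) -> ival t = 0 -> inf_concat e a t = e.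
Proof.
  intros Ha h. rewrite inf_concat_0 by auto. apply (loop_start T e _ (Ha 0%nat)), ival_mkI; lra.
Qed.

Theorem mainTheorem9 (M : Type) (T : topology M) (op : M -> M -> M) (e : M)
  (HM : pre_delta_monoid T op e) (Hpc : path_connected T)
  (a b : nat -> I -> M)
  (Ha : forall n, is_loop T e (a n)) (Hb : forall n, is_loop T e (b n))
  (Hna : null_seq T e a) (Hnb : null_seq T e b) :
  path_homotopic_in T
    (inf_concat e (fun n => concat (a n) (b n)))
    (concat (inf_concat e a) (inf_concat e b))
    (setmul op (image (inf_concat e a)) (image (inf_concat e b))).
Proof.
  destruct HM as [_ [op_e_l [op_e_r Hop]]].
  apply (product_path_homotopic T op (inf_concat e a) (inf_concat e b)
           (blockwise half_left) (blockwise half_right)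
           (fun s => mkI (2 * ival s)) (fun s => mkI (2 * ival s - 1))).
  - exact Hop.
  - apply inf_concat_loops_continuous; auto.
  - apply inf_concat_loops_continuous; auto.
  - apply blockwise_continuous, unit_reparam_half_left.
  - apply blockwise_continuous, unit_reparam_half_right.
  - apply (lipschitz_mkI_continuous (fun x => 2 * x) 2); [lra|].
    intros x y. rewrite <- Rmult_minus_distr_l, Rabs_mult, Rabs_pos_eq; lra.
  - apply (lipschitz_mkI_continuous (fun x => 2 * x - 1) 2); [lra|].
    intros x y. replace (2 * x - 1 - (2 * y - 1)) with (2 * (x - y)) by ring.
    rewrite Rabs_mult, Rabs_pos_eq; lra.
  - intros s [h|h]; split; apply ival_inj.
    + rewrite blockwise_0, ival_mkI_le0; try lra; apply unit_reparam_half_left.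
    + rewrite blockwise_0, ival_mkI_le0; try lra; apply unit_reparam_half_right.
    + rewrite blockwise_1, ival_mkI_ge1; auto; lra.
    + rewrite blockwise_1, ival_mkI; auto; lra.
  - intros s. apply inf_concat_concat_factor; auto;
      intros n; first [apply (loop_start T) | apply (loop_end T)]; auto.
  - apply (concat_factor op e); auto.
    + intros t. apply inf_concat_1.
    + intros t. apply (inf_concat_loops_0 T); auto.
Qed.
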